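(* Let $(A,+,\circ)$ be a finite left brace whose additive group $(A,+)$ is cyclic, let $X$ be a transitive cycle base of $A$ and let $g\in X$. Then $g$ generates the additive group $(A,+)$.
   Context: A left brace is a set $A$ with two operations such that $(A,+)$ is an abelian group, $(A,\circ)$ is a group, and $a\circ(b+c)=a\circ b-a+a\circ c$ for all $a,b,c$. For $a\in A$, $\lambda_a(b):=-a+a\circ b$; $a\mapsto\lambda_a$ is a homomorphism $(A,\circ)\to\mathrm{Aut}(A,+)$, giving an action of $(A,\circ)$ on $A$. A transitive cycle base is a subset of $A$ which is a single orbit of this action and which generates $(A,+)$. *)

From mathcomp Require Import all_boot all_order all_algebra.
Set Implicit Arguments. Unset Strict Implicit. Unset Printing Implicit Defensive.
Import GRing.Theory.
Local Open Scope ring_scope.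

Definition is_left_brace (A : finZmodType) (circ : A -> A -> A) : Prop :=
  [/\ (forall a b c, circ a (circ b c) = circ (circ a b) c),
      (exists e, (forall a, circ e a = a /\ circ a e = a) /\
                 (forall a, exists b, circ a b = e /\ circ b a = e))
    & (forall a b c, circ a (b + c) = circ a b - a + circ a c)].

Definition brace_lambda (A : finZmodType) (circ : A -> A -> A) (a b : A) : A :=
  - a + circ a b.

Definition add_generates (A : finZmodType) (X : {set A}) : Prop :=
  forall y : A, exists c : A -> int, y = \sum_(x in X) (x *~ c x).

Definition add_cyclic (A : finZmodType) : Prop :=
  exists a : A, add_generates [set a].

Definition lambda_orbit (A : finZmodType) (circ : A -> A -> A) (X : {set A}) : Prop :=
  exists x : A, X = [set brace_lambda circ a x | a in A].

Definition transitive_cycle_base (A : finZmodType) (circ : A -> A -> A)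
  (X : {set A}) : Prop :=
  lambda_orbit circ X /\ add_generates X.

From HB Require Import structures.
From mathcomp Require Import all_boot all_order all_algebra.
Set Implicit Arguments.
Unset Strict Implicit.
Unset Printing Implicit Defensive.

Import GRing.Theory.
Local Open Scope ring_scope.

(* Every additive endomorphism of a cyclic group is multiplication by an
   integer.  The maps lambda_b of a left brace are additive, so when (A,+) is
   cyclic each lambda_b(g) is an integer multiple of g.  An orbit of the lambda
   action is the orbit of each of its points, so the transitive cycle base X
   consists of multiples of g; as X generates (A,+), so does g. *)

Section CyclicGroups.
Variable A : finZmodType.

Lemma add_generates1P (g : A) :
  add_generates [set g] <-> forall y, exists m : int, y = g *~ m.
Proof.
split=> [gen_g y | mult_g y].
  by have [c ->] := gen_g y; rewrite big_set1; exists (c g).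
by have [m ->] := mult_g y; exists (fun=> m); rewrite big_set1.
Qed.

Lemma add_generates_multiples (X : {set A}) (g : A) :
  add_generates X -> {in X, forall x, exists m : int, x = g *~ m} ->
  add_generates [set g].
Proof.
move=> genX multX; apply/add_generates1P => y; have [c ->] := genX y.
apply: (big_ind (fun w => exists m : int, w = g *~ m)).
- by exists 0; rewrite mulr0z.
- by move=> _ _ [m1 ->] [m2 ->]; exists (m1 + m2); rewrite mulrzDr.
- by move=> x /multX [m xE]; exists (m * c x); rewrite mulrzA -xE.
Qed.

Lemma cyclic_additive_mulrz (c : A) (f : {additive A -> A}) :
  add_generates [set c] -> exists k : int, forall z, f z = z *~ k.
Proof.
move/add_generates1P=> gen_c; have [k fc] := gen_c (f c).
by exists k => z; have [m ->] := gen_c z; rewrite raddfMz fc mulrzAC.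
Qed.

End CyclicGroups.

Section LeftBrace.
Variables (A : finZmodType) (circ : A -> A -> A).
Hypothesis brace : is_left_brace circ.

Local Notation lambda := (brace_lambda circ).

Lemma brace_circA : forall a b c, circ a (circ b c) = circ (circ a b) c.
Proof. by case: brace. Qed.

Lemma brace_circD : forall a b c, circ a (b + c) = circ a b - a + circ a c.
Proof. by case: brace => _ _. Qed.

Lemma brace_circ0 a : circ a 0 = a.
Proof.
have := brace_circD a 0 0; rewrite addr0 => /(congr1 (fun z => z - circ a 0)).
by rewrite subrr addrK => /esym/eqP; rewrite subr_eq0 => /eqP.
Qed.

Lemma brace_lambda_nmod_morphism a : nmod_morphism (lambda a).
Proof.
split=> [|u v]; first by rewrite /brace_lambda brace_circ0 addNr.
by rewrite /brace_lambda brace_circD !addrA.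
Qed.

Definition brace_lambda_additive (a : A) : {additive A -> A} :=
  HB.pack (lambda a) (GRing.isNmodMorphism.Build _ _ _ (brace_lambda_nmod_morphism a)).

Lemma brace_lambdaM a b c : lambda (circ a b) c = lambda a (lambda b c).
Proof.
have lambdaN u : lambda a (- u) = - lambda a u := raddfN (brace_lambda_additive a) u.
have lambdaD u v : lambda a (u + v) = lambda a u + lambda a v :=
  raddfD (brace_lambda_additive a) u v.
rewrite [lambda b c]/brace_lambda lambdaD lambdaN /brace_lambda brace_circA.
by rewrite opprD opprK addrACA subrr add0r.
Qed.

Lemma brace_lambdaK a : exists b, cancel (lambda a) (lambda b).
Proof.
case: brace => _ [e [unit_e inv] _]; have [b [_ ba_e]] := inv a.
have e0 : e = 0 by rewrite -[LHS]brace_circ0 (proj1 (unit_e 0)).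
exists b => x; rewrite -brace_lambdaM ba_e /brace_lambda (proj1 (unit_e x)) e0.
by rewrite oppr0 add0r.
Qed.

Lemma lambda_orbit_of_mem (x g : A) (X : {set A}) :
  X = [set lambda a x | a in A] -> g \in X -> X = [set lambda b g | b in A].
Proof.
move=> -> /imsetP [a _ ->]; have [a' lambda_aK] := brace_lambdaK a.
apply/eqP; rewrite eqEsubset; apply/andP; split; apply/subsetP=> _ /imsetP [b _ ->].
  by apply/imsetP; exists (circ b a') => //; rewrite brace_lambdaM lambda_aK.
by apply/imsetP; exists (circ b a) => //; rewrite brace_lambdaM.
Qed.

End LeftBrace.

Theorem mainTheorem2 (A : finZmodType) (circ : A -> A -> A) (X : {set A}) (g : A) :
  is_left_brace circ -> add_cyclic A -> transitive_cycle_base circ X ->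
  g \in X -> add_generates [set g].
Proof.
move=> brace [c gen_c] [[x defX] genX] gX.
apply: (add_generates_multiples genX).
rewrite (lambda_orbit_of_mem brace defX gX) => _ /imsetP [b _ ->].
have [k lambda_bE] := cyclic_additive_mulrz (brace_lambda_additive brace b) gen_c.
by exists k; apply: lambda_bE.
Qed.
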